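(* Let $m\ge1$, $k\ge1$, $n\ge2$, let $\ell=(\ell_1,\dots,\ell_m)$ with $\ell_i\ge0$, $\sum_i\ell_i=1$, and let $\mathbf{P}=(p_{ij})$ be a symmetric $m\times m$ matrix with entries in $[0,1]$. Let $G=(V,E)$ be a random graph on $n=|V|$ nodes drawn from $\mathcal{W}_k(\mathbf{P},\ell)$, and let $s=\sum_{i,j\in[m]}p_{ij}\ell_i\ell_j$. Then: (i) for every integer $1\le d\le n-1$, $$\mathbb{E}[S_d]=n\binom{n-1}{d}\Bigl(\sum_{i_1,\dots,i_{d+1}\in[m]}\prod_{j=2}^{d+1}p_{i_1i_j}\prod_{j=1}^{d+1}\ell_{i_j}\Bigr)^k;$$ in particular $\mathbb{E}[S_2]=n\binom{n-1}{2}\bigl(\sum_{i_1,i_2,i_3\in[m]}p_{i_1i_2}p_{i_1i_3}\ell_{i_1}\ell_{i_2}\ell_{i_3}\bigr)^k$. (ii) The variance of the number of edges is $$\operatorname{Var}(|E|)=\binom{n}{2}s^k\Bigl(1-\binom{n}{2}s^k\Bigr)+2\,\mathbb{E}[S_2]+\binom{n}{2}\binom{n-2}{2}s^{2k}.$$ (iii) For every integer $2\le t\le n$, $\mathbb{E}[C_t]=\binom{n}{t}s_t^k$, where $$s_t=\sum_{i_1,\dots,i_t\in[m]}\Bigl(\prod_{1\le j<q\le t}p_{i_ji_q}\Bigr)\ell_{i_1}\ell_{i_2}\cdots\ell_{i_t};$$ in particular $\mathbb{E}[C_3]=\binom{n}{3}\bigl(\sum_{i,j,t\in[m]}p_{ij}p_{it}p_{jt}\ell_i\ell_j\ell_t\bigr)^k$.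 (iv) Writing $D_d$ for the number of nodes of degree exactly $d$, one has $\mathbb{E}[D_{n-1}]=\mathbb{E}[S_{n-1}]$ and, for $1\le d\le n-2$, $$\mathbb{E}[D_d]=\mathbb{E}[S_d]-\sum_{i=d+1}^{n-1}\binom{i}{d}\mathbb{E}[D_i].$$
   Context: Multifractal network generator (MFNG). Given $m$, $\ell$, $\mathbf{P}$ and a recursion depth $k\ge1$, $\mathcal{W}_k(\mathbf{P},\ell)$ is the distribution of the undirected random graph on $n$ nodes produced as follows. (1) Partition $[0,1]$ into $m$ consecutive subintervals of lengths $\ell_1,\dots,\ell_m$; recursively partition each into $m$ pieces with relative lengths $\ell_1,\dots,\ell_m$, for $k$ levels in total, giving $m^k$ intervals indexed by $(i_1,\dots,i_k)\in[m]^k$ of lengths $\prod_r\ell_{i_r}$. (2) Each node is placed at an independent uniform point of $[0,1]$ and receives the category tuple $c(u)=(i_1,\dots,i_k)$ of its interval. (3) Conditionally on the categories, independently for each pair of distinct nodes $u,v$ with $c(u)=(i_1,\dots,i_k)$, $c(v)=(j_1,\dots,j_k)$, the edge $\{u,v\}$ is present with probability $\prod_{r=1}^kp_{i_rj_r}$. Subgraph counts. A $d$-star is a graph on $d+1$ vertices in which one center vertex is joined to each of the other $d$ vertices (and no other edges). $S_d$ denotes the number of (not necessarily induced) $d$-stars in $G$, counted as the number of pairs $(v,D)$ with $v\in V$ and $D$ a $d$-element subset of the neighbors of $v$; $2$-stars are called wedges. A $t$-clique is a set of $t$ vertices that are pairwise adjacent; $C_t$ denotes the number of $t$-cliques in $G$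 ($3$-cliques are triangles). *)

From HB Require Import structures.
From mathcomp Require Import all_boot all_order all_algebra.
Set Implicit Arguments. Unset Strict Implicit. Unset Printing Implicit Defensive.
Import Order.TTheory GRing.Theory Num.Theory.
Local Open Scope ring_scope.

Section MFNG.
Variables (R : realFieldType) (n k m : nat).
Variables (P : 'M[R]_m) (l : 'I_m -> R).

Definition cattuple := {ffun 'I_k -> 'I_m}.
Definition catassign := {ffun 'I_n -> cattuple}.

(* Probability that an independent uniform point of [0,1] falls in the
   interval indexed by (i_1,...,i_k): its length prod_r l_{i_r}. *)
Definition cat_prob (c : catassign) : R :=
  \prod_(u : 'I_n) \prod_(r : 'I_k) l (c u r).

Definition edge_prob (c : catassign) (u v : 'I_n) : R :=
  \prod_(r : 'I_k) P (c u r) (c v r).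

(* A graph on node set 'I_n is encoded by its edge set E, a set of pairs
   (u,v) with u < v (each unordered pair {u,v} stored once). *)
Definition upper_pair (p : 'I_n * 'I_n) : bool := (p.1 < p.2)%N.

Definition well_formed (E : {set 'I_n * 'I_n}) : bool :=
  [forall p in E, upper_pair p].

Definition mfng_weight (c : catassign) (E : {set 'I_n * 'I_n}) : R :=
  cat_prob c * (well_formed E)%:R *
  \prod_(p : 'I_n * 'I_n | upper_pair p)
     (if p \in E then edge_prob c p.1 p.2 else 1 - edge_prob c p.1 p.2).

Definition mfng_E (X : {set 'I_n * 'I_n} -> R) : R :=
  \sum_(c : catassign) \sum_(E : {set 'I_n * 'I_n}) mfng_weight c E * X E.

Definition mfng_Var (X : {set 'I_n * 'I_n} -> R) : R :=
  mfng_E (fun E => X E ^+ 2) - (mfng_E X) ^+ 2.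

End MFNG.

Section Stats.
Variable (n : nat).
Implicit Types (E : {set 'I_n * 'I_n}).

Definition adj E (u v : 'I_n) : bool := ((u, v) \in E) || ((v, u) \in E).

Definition nbhd E (v : 'I_n) : {set 'I_n} := [set u | adj E v u].

Definition num_edges E : nat := #|[set p in E | upper_pair p]|.

Definition num_stars (d : nat) E : nat :=
  \sum_(v : 'I_n) #|[set D : {set 'I_n} | (D \subset nbhd E v) && (#|D| == d)]|.

Definition num_cliques (t : nat) E : nat :=
  #|[set A : {set 'I_n} | (#|A| == t) &&
      [forall u in A, forall v in A, (u != v) ==> adj E u v]]|.

Definition num_deg (d : nat) E : nat := #|[set v : 'I_n | #|nbhd E v| == d]|.
End Stats.

(* Conditionally on the categories, edges are independent, and the k levels of the
   category tuples are independent, so for every set F of node pairs the probability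
   that F is contained in the graph is d(F)^k, where the density d(F) is the same
   probability for a single level (k = 1).  Nodes outside F contribute a factor
   sum_i l_i = 1, so d(F) only depends on the shape of F: a star with d leaves, a
   t-clique, a single edge, a wedge, or two disjoint edges.  Each statistic is a sum
   of such indicators (S_d over pairs (v, D), C_t over t-sets, |E|^2 over ordered
   pairs of edges), and linearity of expectation gives (i)-(iii); (iv) follows from
   S_d = sum_v C(deg v, d) = sum_i C(i, d) D_i. *)

From HB Require Import structures.
From mathcomp Require Import all_boot all_order all_algebra.
From mathcomp Require Import ring zify.
Set Implicit Arguments. Unset Strict Implicit. Unset Printing Implicit Defensive.
Import Order.TTheory GRing.Theory Num.Theory.

Lemma bin2_mul2 a : 'C(a, 2) * 2 = a * a.-1.
Proof. by rewrite mulnC -(mul_bin_diag a 1) bin1. Qed.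

Lemma imset_set2 (T U : finType) (f : T -> U) (a b : T) : f @: [set a; b] = [set f a; f b].
Proof. by rewrite imsetU1 imset_set1. Qed.

Local Open Scope ring_scope.

Lemma natr_bin2 (R : numFieldType) a : 'C(a, 2)%:R = a%:R * a.-1%:R / 2 :> R.
Proof. by rewrite -natrM -bin2_mul2 natrM mulfK // pnatr_eq0. Qed.

Section BigOps.
Variable R : comPzRingType.

Lemma prodr_natb (I : finType) (Q : pred I) (b : pred I) :
  \prod_(i | Q i) (b i)%:R = [forall i, Q i ==> b i]%:R :> R.
Proof.
case: (boolP [forall i, Q i ==> b i]) => [/forallP Qb | /forallPn [i]].
  by rewrite big1 // => i Qi; move: (Qb i); rewrite Qi => /= ->.
by rewrite negb_imply => /andP[Qi /negbTE bi]; rewrite (bigD1 i) //= bi mul0r.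
Qed.

Lemma sum_set_prod (T : finType) (h : T -> bool -> R) :
  \sum_(E : {set T}) \prod_p h p (p \in E) = \prod_p (h p true + h p false).
Proof.
under [RHS]eq_bigr do rewrite -big_bool.
rewrite bigA_distr_bigA (reindex (fun f : {ffun T -> bool} => [set p | f p])) /=.
  by apply: eq_bigr => f _; apply: eq_bigr => p _; rewrite inE.
exists (fun E : {set T} => [ffun p => p \in E]) => [f _|E _].
  by apply/ffunP => p; rewrite ffunE inE.
by apply/setP => p; rewrite inE ffunE.
Qed.

Lemma sum_ffun_transpose (I J K : finType) (h : J -> {ffun I -> K} -> R) :
  \sum_(c : {ffun I -> {ffun J -> K}}) \prod_r h r [ffun u => c u r]
  = \prod_r \sum_f h r f.
Proof.
rewrite bigA_distr_bigA /= [RHS](reindex (fun c : {ffun I -> {ffun J -> K}} =>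
           [ffun r => [ffun u => c u r]])) /=.
  by apply: eq_bigr => c _; apply: eq_bigr => r _; rewrite ffunE.
exists (fun F : {ffun J -> {ffun I -> K}} => [ffun u => [ffun r => F r u]]).
  by move=> c _; apply/ffunP => u; apply/ffunP => r; rewrite !ffunE.
by move=> F _; apply/ffunP => r; apply/ffunP => u; rewrite !ffunE.
Qed.

Lemma prod_inj_image (I J : finType) (h : I -> J) (F : J -> R) :
  injective h -> (forall j, j \notin [set h i | i in I] -> F j = 1) ->
  \prod_j F j = \prod_i F (h i).
Proof.
move=> h_inj F1; rewrite (bigID (mem [set h i | i in I])) /= [X in _ * X]big1 //.
by rewrite mulr1 big_imset //= => i i' _ _ /h_inj.
Qed.

Lemma prod_ltn_pairs_inj (t n : nat) (h : 'I_t -> 'I_n) (Y : 'I_t -> 'I_t -> R) :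
  injective h -> (forall i j, Y i j = Y j i) ->
  \prod_(i : 'I_t) \prod_(j : 'I_t | (h i < h j)%N) Y i j =
  \prod_(i : 'I_t) \prod_(j : 'I_t | (i < j)%N) Y i j.
Proof.
move=> h_inj Ysym; rewrite !pair_big_dep /=.
rewrite (bigID (fun p : 'I_t * 'I_t => (p.1 < p.2)%N)) /=.
rewrite [RHS](bigID (fun p : 'I_t * 'I_t => (h p.1 < h p.2)%N)) /=.
rewrite [X in _ * X = _](reindex (fun p : 'I_t * 'I_t => (p.2, p.1))) /=; last first.
  by exists (fun p : 'I_t * 'I_t => (p.2, p.1)) => -[].
congr (_ * _); first by apply: eq_bigl => -[i j] /=; rewrite andbC.
apply: eq_big => [[i j]|[i j] _] /=; last by rewrite Ysym.
have [ij|ji|/val_inj ->] := ltngtP i j; rewrite ?ltnn ?andbF //=.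
have hne : h j != h i by apply: contraTneq ij => /h_inj ->; rewrite ltnn.
by rewrite andbT -leqNgt ltn_neqAle hne.
Qed.

Lemma sumr_const_cond (I : finType) (Q : pred I) (x : R) :
  \sum_(i | Q i) x = x *+ #|[set i | Q i]|.
Proof. by rewrite -sumr_const; apply: eq_bigl => i; rewrite inE. Qed.

Lemma sum_ffunS (T : finType) t (F : {ffun 'I_t.+1 -> T} -> R) :
  \sum_g F g = \sum_(x : T) \sum_(g : {ffun 'I_t -> T})
     F [ffun j => if unlift ord0 j is Some j' then g j' else x].
Proof.
rewrite pair_big /= (reindex (fun p : T * {ffun 'I_t -> T} =>
   [ffun j => if unlift ord0 j is Some j' then p.2 j' else p.1])) //=.
exists (fun g : {ffun 'I_t.+1 -> T} => (g ord0, [ffun j => g (lift ord0 j)])).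
  move=> [x g] _ /=; rewrite ffunE unlift_none; congr (_, _).
  by apply/ffunP => j; rewrite !ffunE liftK.
move=> g _; apply/ffunP => j; rewrite !ffunE.
by case: (unliftP ord0 j) => [j' ->|->]; rewrite ?ffunE.
Qed.

Lemma sum_ffun0 (T : finType) (F : {ffun 'I_0 -> T} -> R) g0 : \sum_g F g = F g0.
Proof. by rewrite (big_pred1 g0) // => g /=; symmetry; apply/eqP/ffunP => -[]. Qed.

Lemma sum_ffun2 (T : finType) (F : {ffun 'I_2 -> T} -> R) :
  \sum_g F g = \sum_x \sum_y F [ffun j : 'I_2 => nth x [:: x; y] j].
Proof.
rewrite sum_ffunS; apply: eq_bigr => x _; rewrite sum_ffunS; apply: eq_bigr => ? _.
rewrite (sum_ffun0 _ [ffun=> x]); congr F; apply/ffunP => j; rewrite !ffunE.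
do 2!(case: (unliftP ord0 j) => [{}j ->|->]; rewrite ?liftK ?unlift_none ?ffunE //).
by case: j.
Qed.

Lemma sum_ffun3 (T : finType) (F : {ffun 'I_3 -> T} -> R) :
  \sum_g F g = \sum_x \sum_y \sum_z F [ffun j : 'I_3 => nth x [:: x; y; z] j].
Proof.
rewrite sum_ffunS; apply: eq_bigr => x _.
do 2![rewrite sum_ffunS; apply: eq_bigr => ? _].
rewrite (sum_ffun0 _ [ffun=> x]); congr F; apply/ffunP => j; rewrite !ffunE.
do 3!(case: (unliftP ord0 j) => [{}j ->|->]; rewrite ?liftK ?unlift_none ?ffunE //).
by case: j.
Qed.

Lemma sum_ffun4 (T : finType) (F : {ffun 'I_4 -> T} -> R) :
  \sum_g F g = \sum_x \sum_y \sum_z \sum_w F [ffun j : 'I_4 => nth x [:: x; y; z; w] j].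
Proof.
rewrite sum_ffunS; apply: eq_bigr => x _.
do 3![rewrite sum_ffunS; apply: eq_bigr => ? _].
rewrite (sum_ffun0 _ [ffun=> x]); congr F; apply/ffunP => j; rewrite !ffunE.
do 4!(case: (unliftP ord0 j) => [{}j ->|->]; rewrite ?liftK ?unlift_none ?ffunE //).
by case: j.
Qed.

End BigOps.

Section Model.
Variables (R : realFieldType) (n k m : nat) (P : 'M[R]_m) (l : 'I_m -> R).
Hypothesis P_sym : forall i j, P i j = P j i.
Hypothesis l_sum1 : \sum_i l i = 1.
Local Notation EE := (@mfng_E R n k m P l).
Local Notation graph := {set 'I_n * 'I_n}.

Lemma sum_prod_fiber t (h : 'I_t -> 'I_n) (g : {ffun 'I_t -> 'I_m}) : injective h ->
  \sum_(f : {ffun 'I_n -> 'I_m} | [ffun j => f (h j)] == g) \prod_u l (f u)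
  = \prod_j l (g j).
Proof.
move=> h_inj; pose hinv u := [pick j | h j == u].
have hinvK j : hinv (h j) = Some j.
  by rewrite /hinv; case: pickP => [j' /eqP/h_inj -> //|/(_ j)]; rewrite eqxx.
have hinvN u : u \notin [set h j | j in 'I_t] -> hinv u = None.
  by move=> u_out; rewrite /hinv; case: pickP => // j /eqP hj; case/imsetP: u_out; exists j.
(* [w u] forces the category of node [u] to be [g j] when [u = h j] *)
pose w u i := l i * (if hinv u is Some j then (i == g j)%:R else 1).
transitivity (\sum_(f : {ffun 'I_n -> 'I_m}) \prod_u w u (f u)).
  rewrite big_mkcond; apply: eq_bigr => f _; rewrite big_split /=.
  rewrite [X in _ = _ * X](prod_inj_image h_inj) => [|u /hinvN u_out]; last by rewrite u_out.
  under [X in _ * X]eq_bigr do rewrite hinvK.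
  rewrite prodr_natb (_ : [forall j, _] = ([ffun j => f (h j)] == g)).
    by case: (_ == g); rewrite ?mulr1 ?mulr0.
  apply/forallP/eqP => [fg|<- j]; last by rewrite ffunE eqxx.
  by apply/ffunP => j; rewrite ffunE; exact/eqP/fg.
rewrite -bigA_distr_bigA /= (prod_inj_image h_inj) => [|u /hinvN u_out]; last first.
  by rewrite /w u_out; under eq_bigr do rewrite mulr1.
apply: eq_bigr => j _; rewrite /w hinvK (bigD1 (g j)) //= eqxx mulr1 big1 ?addr0 //.
by move=> i /negPf ->; rewrite mulr0.
Qed.

Lemma sum_marginal_inj t (h : 'I_t -> 'I_n) (psi : {ffun 'I_t -> 'I_m} -> R) :
  injective h ->
  \sum_(f : {ffun 'I_n -> 'I_m}) (\prod_u l (f u)) * psi [ffun j => f (h j)]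
  = \sum_(g : {ffun 'I_t -> 'I_m}) (\prod_j l (g j)) * psi g.
Proof.
move=> h_inj.
rewrite (partition_big (fun f : {ffun 'I_n -> 'I_m} => [ffun j => f (h j)]) predT) //=.
apply: eq_bigr => g _; rewrite -(sum_prod_fiber g h_inj) mulr_suml.
by apply: eq_bigr => f /eqP ->.
Qed.

Lemma sum_cat_prob_levels (F : {ffun 'I_n -> 'I_m} -> R) :
  \sum_(c : catassign n k m) cat_prob l c * \prod_r F [ffun u => c u r]
  = (\sum_(f : {ffun 'I_n -> 'I_m}) (\prod_u l (f u)) * F f) ^+ k.
Proof.
rewrite -[k in RHS]card_ord -prodr_const.
rewrite -(sum_ffun_transpose (fun r f => (\prod_u l (f u)) * F f)).
apply: eq_bigr => c _; rewrite big_split /=; congr (_ * _).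
rewrite /cat_prob exchange_big /=; apply: eq_bigr => r _; apply: eq_bigr => u _.
by rewrite ffunE.
Qed.

Definition edge_term (c : catassign n k m) (F : graph) (p : 'I_n * 'I_n) (b : bool) : R :=
  if upper_pair p then
    (if b then edge_prob P c p.1 p.2 else 1 - edge_prob P c p.1 p.2) *
    (if p \in F then b%:R else 1)
  else (~~ b)%:R.

Lemma mfng_weight_subset (c : catassign n k m) (F E : graph) : {subset F <= @upper_pair n} ->
  mfng_weight P l c E * (F \subset E)%:R
  = cat_prob l c * \prod_p edge_term c F p (p \in E).
Proof.
move=> F_up; rewrite /mfng_weight -!mulrA; congr (_ * _).
rewrite [RHS](bigID (@upper_pair n)) /= mulrC; congr (_ * _).
  rewrite /edge_term; under [RHS]eq_bigr => p up do rewrite up.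
  rewrite big_split /=; congr (_ * _).
  rewrite -big_mkcondr /= prodr_natb; congr ((nat_of_bool _)%:R).
  apply/subsetP/forallP => [FE p|FE p pF]; first by apply/implyP => /andP[_ /FE].
  by move: (FE p); rewrite pF andbT => /implyP; apply; exact: F_up.
rewrite /edge_term; under eq_bigr => p /negPf up do rewrite up.
rewrite prodr_natb; congr ((nat_of_bool _)%:R); apply/forallP/forallP => wf p; move: (wf p);
  by case: (upper_pair p); case: (p \in E).
Qed.

Lemma sum_mfng_weight_subset (c : catassign n k m) (F : graph) : {subset F <= @upper_pair n} ->
  \sum_(E : graph) mfng_weight P l c E * (F \subset E)%:R
  = cat_prob l c * \prod_(q in F) edge_prob P c q.1 q.2.
Proof.
move=> F_up; rewrite (eq_bigr _ (fun E _ => mfng_weight_subset c E F_up)).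
rewrite -mulr_sumr sum_set_prod [in RHS]big_mkcond; congr (_ * _).
apply: eq_bigr => p _; rewrite /edge_term.
case up: (upper_pair p); case pF: (p \in F) => /=.
- by rewrite mulr1 mulr0 addr0.
- by rewrite !mulr1 addrC subrK.
- by have : upper_pair p := F_up p pF; rewrite up.
- by rewrite add0r.
Qed.

(* the probability, at a single level of the recursion, that all pairs of [F] are edges *)
Definition subgraph_density (F : graph) : R :=
  \sum_(f : {ffun 'I_n -> 'I_m}) (\prod_u l (f u)) * \prod_(q in F) P (f q.1) (f q.2).

Lemma mfng_E_subset (F : graph) : {subset F <= @upper_pair n} ->
  EE (fun E => (F \subset E)%:R) = subgraph_density F ^+ k.
Proof.
move=> F_up; rewrite /mfng_E -sum_cat_prob_levels; apply: eq_bigr => c _.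
rewrite sum_mfng_weight_subset //; congr (_ * _).
rewrite /edge_prob exchange_big /=; apply: eq_bigr => r _; apply: eq_bigr => q _.
by rewrite !ffunE.
Qed.

Lemma mfng_E_wf (X Y : graph -> R) :
  (forall E, well_formed E -> X E = Y E) -> EE X = EE Y.
Proof.
move=> XY; apply: eq_bigr => c _; apply: eq_bigr => E _; rewrite /mfng_weight.
by case: (boolP (well_formed E)) => [/XY -> | _]; rewrite ?mulr0 ?mul0r.
Qed.

Lemma mfng_E_sum (I : Type) (r : seq I) (Q : pred I) (X : I -> graph -> R) :
  EE (fun E => \sum_(i <- r | Q i) X i E) = \sum_(i <- r | Q i) EE (X i).
Proof.
rewrite /mfng_E; under eq_bigr do under eq_bigr do rewrite mulr_sumr.
by under eq_bigr do rewrite exchange_big; rewrite exchange_big.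
Qed.

Lemma mfng_E_scale a (X : graph -> R) : EE (fun E => a * X E) = a * EE X.
Proof.
rewrite /mfng_E mulr_sumr; apply: eq_bigr => c _; rewrite mulr_sumr.
by apply: eq_bigr => E _; rewrite mulrCA.
Qed.

Definition upair (u v : 'I_n) : 'I_n * 'I_n := if (u < v)%N then (u, v) else (v, u).

Lemma upairC u v : upair u v = upair v u.
Proof. by rewrite /upair; case: (ltngtP u v) => [_|_|/val_inj ->]. Qed.

Lemma upper_upair u v : u != v -> upper_pair (upair u v).
Proof.
rewrite /upair /upper_pair => uv; case: (ltngtP u v) => [//|//|/val_inj eq_uv].
by rewrite eq_uv eqxx in uv.
Qed.

Lemma upair_inj v : injective (upair v).
Proof. by move=> a b; rewrite /upair; do 2!case: ifP => _; case=> -> // ->. Qed.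

Lemma upair_eq_mem u v u' v' : upair u v = upair u' v' -> (u' == u) || (u' == v).
Proof. by rewrite /upair; do 2!case: ifP => _; case=> -> ->; rewrite eqxx ?orbT. Qed.

Lemma P_upair (f : 'I_n -> 'I_m) u v :
  P (f (upair u v).1) (f (upair u v).2) = P (f u) (f v).
Proof. by rewrite /upair; case: ifP => //= _; rewrite P_sym. Qed.

Lemma loop_notin_wf (E : graph) v : well_formed E -> (v, v) \notin E.
Proof.
move=> /forallP wf; apply/negP => /(implyP (wf (v, v))).
by rewrite /upper_pair /= ltnn.
Qed.

Lemma adj_upair (E : graph) u v : well_formed E -> adj E u v = (upair u v \in E).
Proof.
move=> /forallP wf; rewrite /adj /upair.
have lower_notin (a b : 'I_n) : (b < a)%N -> (a, b) \notin E.
  move=> ba; apply/negP => /(implyP (wf (a, b))).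
  by rewrite /upper_pair /= ltnNge (ltnW ba).
case: ltngtP => [uv|vu|/val_inj ->]; last by rewrite orbb.
  by rewrite (negPf (lower_notin _ _ uv)) orbF.
by rewrite (negPf (lower_notin _ _ vu)).
Qed.

Definition star_density d := \sum_(i : {ffun 'I_d.+1 -> 'I_m})
  (\prod_(j : 'I_d.+1 | (0 < j)%N) P (i ord0) (i j)) * \prod_(j : 'I_d.+1) l (i j).

Lemma num_stars_upair d (E : graph) : well_formed E ->
  num_stars d E = (\sum_v \sum_(D : {set 'I_n} | (#|D| == d) && (v \notin D))
                     ([set upair v u | u in D] \subset E))%N.
Proof.
move=> wf; apply: eq_bigr => v _.
rewrite -sum1_card big_mkcond [RHS]big_mkcond; apply: eq_bigr => D _; rewrite inE.
have -> : (D \subset nbhd E v) = (v \notin D) && ([set upair v u | u in D] \subset E).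
  apply/subsetP/andP => [DN|[vD /subsetP DE] u uD].
    split; last by apply/subsetP => q /imsetP [u /DN + ->]; rewrite inE adj_upair.
    by apply/negP => /DN; rewrite inE adj_upair // /upair ltnn (negPf (loop_notin_wf v wf)).
  by rewrite inE adj_upair //; apply: DE; apply: imset_f.
by case: (#|D| == d); case: (v \in D); case: (_ \subset E).
Qed.

Lemma subgraph_density_star v (D : {set 'I_n}) : v \notin D ->
  subgraph_density [set upair v u | u in D] = star_density #|D|.
Proof.
move=> vD; pose h (j : 'I_#|D|.+1) := if unlift ord0 j is Some j' then enum_val j' else v.
have h_inj : injective h.
  move=> a b; rewrite /h.
  case: (unliftP ord0 a) => [a' ->|->]; case: (unliftP ord0 b) => [b' ->|->];
    rewrite ?liftK ?unlift_none //.
  - by move/enum_val_inj => ->.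
  - by move=> e; move: (enum_valP a'); rewrite e (negPf vD).
  - by move=> e; move: (enum_valP b'); rewrite -e (negPf vD).
rewrite /star_density; under [RHS]eq_bigr do rewrite mulrC.
rewrite -(sum_marginal_inj
  (fun g : {ffun 'I_#|D|.+1 -> 'I_m} =>
     \prod_(j : 'I_#|D|.+1 | (0 < j)%N) P (g ord0) (g j)) h_inj).
apply: eq_bigr => f _; congr (_ * _).
rewrite big_imset /=; last by move=> a b _ _; apply: upair_inj.
under eq_bigr do rewrite P_upair.
rewrite big_enum_val /= [RHS]big_mkcond big_ord_recl /= mul1r.
by apply: eq_bigr => j _; rewrite !ffunE /h liftK unlift_none.
Qed.

Lemma card_draws_notin v d :
  #|[set D : {set 'I_n} | (#|D| == d) && (v \notin D)]| = 'C(n.-1, d).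
Proof.
rewrite -[n in RHS]card_ord -(cardsC1 v) -cards_draws.
apply: eq_card => D; rewrite !inE andbC; congr (_ && _).
apply/idP/subsetP => [vD u uD|DC]; first by rewrite !inE; apply: contraNneq vD => <-.
by apply/negP => /DC; rewrite !inE eqxx.
Qed.

Lemma mfng_E_num_stars d :
  EE (fun E => (num_stars d E)%:R) = (n * 'C(n.-1, d))%:R * star_density d ^+ k.
Proof.
rewrite (@mfng_E_wf _ (fun E => \sum_v \sum_(D : {set 'I_n} | (#|D| == d) && (v \notin D))
                     ([set upair v u | u in D] \subset E)%:R)); last first.
  by move=> E wf; rewrite num_stars_upair // natr_sum; apply: eq_bigr => v _; rewrite natr_sum.
rewrite mfng_E_sum (eq_bigr (fun _ => star_density d ^+ k *+ 'C(n.-1, d))).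
  by rewrite sumr_const card_ord -mulrnA mulr_natl mulnC.
move=> v _; rewrite mfng_E_sum -(card_draws_notin v) -sumr_const_cond.
apply: eq_bigr => D /andP[/eqP <- vD]; rewrite mfng_E_subset ?subgraph_density_star //.
by move=> q /imsetP [u uD ->]; apply: upper_upair; apply: contraNneq vD => ->.
Qed.

Definition clique_pairs (A : {set 'I_n}) : graph :=
  [set p | (p.1 \in A) && (p.2 \in A) && (p.1 < p.2)%N].

Definition clique_density t := \sum_(i : {ffun 'I_t -> 'I_m})
  (\prod_(j : 'I_t) \prod_(q : 'I_t | (j < q)%N) P (i j) (i q)) * \prod_(j : 'I_t) l (i j).

Lemma num_cliques_pairs t (E : graph) : well_formed E ->
  num_cliques t E = (\sum_(A : {set 'I_n} | #|A| == t) (clique_pairs A \subset E))%N.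
Proof.
move=> wf; rewrite /num_cliques -sum1_card big_mkcond [RHS]big_mkcond.
apply: eq_bigr => A _; rewrite inE.
have -> : [forall u in A, forall v in A, (u != v) ==> adj E u v] = (clique_pairs A \subset E).
  apply/forallP/subsetP => [AE [a b]|AE u].
    rewrite inE /= => /andP[/andP[aA bA] ab].
    move: (AE a); rewrite aA => /forallP /(_ b); rewrite bA neq_ltn ab /=.
    by rewrite adj_upair // /upair ab.
  apply/implyP => uA; apply/forallP => v; apply/implyP => vA; apply/implyP => uv.
  rewrite adj_upair //; apply: AE; rewrite /upair inE.
  case: ltngtP => [uv'|vu|/val_inj uv']; rewrite /= ?uA ?vA //.
  by move: uv; rewrite uv' eqxx.
by case: (#|A| == t); case: (_ \subset E).
Qed.

Lemma subgraph_density_clique (A : {set 'I_n}) :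
  subgraph_density (clique_pairs A) = clique_density #|A|.
Proof.
rewrite /clique_density; under [RHS]eq_bigr do rewrite mulrC.
rewrite -(sum_marginal_inj (fun g : {ffun 'I_#|A| -> 'I_m} =>
     \prod_(j : 'I_#|A|) \prod_(q : 'I_#|A| | (j < q)%N) P (g j) (g q))
     (@enum_val_inj _ (mem A))).
apply: eq_bigr => f _; congr (_ * _).
rewrite (eq_bigl (fun p : 'I_n * 'I_n => (p.1 \in A) && ((p.2 \in A) && (p.1 < p.2)%N)));
  last by move=> p; rewrite inE andbA.
rewrite -(pair_big_dep (fun u => u \in A) (fun u w => (w \in A) && (u < w)%N)
              (fun u w => P (f u) (f w))) /= big_enum_val /=.
under eq_bigr do rewrite big_enum_val_cond /=.
have P_enum_sym (j q : 'I_#|A|) :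
  P (f (enum_val j)) (f (enum_val q)) = P (f (enum_val q)) (f (enum_val j)).
  exact: P_sym.
apply: etrans (prod_ltn_pairs_inj (@enum_val_inj _ (mem A)) P_enum_sym) _.
by apply: eq_bigr => j _; apply: eq_bigr => q _; rewrite !ffunE.
Qed.

Lemma mfng_E_num_cliques t :
  EE (fun E => (num_cliques t E)%:R) = 'C(n, t)%:R * clique_density t ^+ k.
Proof.
rewrite (@mfng_E_wf _ (fun E => \sum_(A : {set 'I_n} | #|A| == t) (clique_pairs A \subset E)%:R));
  last by move=> E wf; rewrite num_cliques_pairs // natr_sum.
rewrite mfng_E_sum -[n in 'C(n, t)]card_ord -card_draws mulr_natl -sumr_const_cond.
apply: eq_bigr => A /eqP <-; rewrite mfng_E_subset ?subgraph_density_clique //.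
by move=> q; rewrite inE => /andP[_].
Qed.

Lemma deg_lt_n (E : graph) v : well_formed E -> (#|nbhd E v| < n)%N.
Proof.
move=> wf; have : nbhd E v \subset [set~ v].
  apply/subsetP => u; rewrite !inE adj_upair //; apply: contraTneq => ->.
  by rewrite /upair ltnn (negPf (loop_notin_wf v wf)).
move/subset_leq_card; rewrite cardsC1 card_ord => /leq_ltn_trans; apply.
by rewrite prednK // (leq_ltn_trans (leq0n v) (ltn_ord v)).
Qed.

Lemma bin_sum_indicator x d : (x < n)%N ->
  'C(x, d) = (\sum_(d <= i < n) 'C(i, d) * (x == i))%N.
Proof.
move=> xn; rewrite big_geq_mkord big_mkcond (bigD1 (Ordinal xn)) //= eqxx muln1.
rewrite big1 ?addn0 => [|i /negPf]; first by case: leqP => // /bin_small.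
by rewrite -val_eqE eq_sym /= => ->; rewrite muln0; case: ifP.
Qed.

Lemma num_stars_deg d (E : graph) : well_formed E ->
  num_stars d E = (\sum_(d <= i < n) 'C(i, d) * num_deg i E)%N.
Proof.
move=> wf; rewrite /num_stars (eq_bigr (fun v => 'C(#|nbhd E v|, d))) => [|v _];
  last exact: cards_draws.
under [RHS]eq_bigr do rewrite /num_deg -sum1_card big_mkcond big_distrr /=.
rewrite exchange_big /=; apply: eq_bigr => v _; rewrite (bin_sum_indicator _ (deg_lt_n v wf)).
by apply: eq_bigr => i _; rewrite inE; case: eqP; rewrite ?muln1 ?muln0.
Qed.

Lemma mfng_E_num_stars_deg d :
  EE (fun E => (num_stars d E)%:R) =
  \sum_(d <= i < n) 'C(i, d)%:R * EE (fun E => (num_deg i E)%:R).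
Proof.
under eq_bigr do rewrite -mfng_E_scale.
rewrite -mfng_E_sum; apply: mfng_E_wf => E wf.
rewrite num_stars_deg // natr_sum; apply: eq_bigr => i _; exact: natrM.
Qed.

Definition edge_density := \sum_(i < m) \sum_(j < m) P i j * l i * l j.

Definition wedge_density :=
  \sum_(i1 < m) \sum_(i2 < m) \sum_(i3 < m) P i1 i2 * P i1 i3 * l i1 * l i2 * l i3.

Lemma star_density1 : star_density 1 = edge_density.
Proof.
rewrite /star_density sum_ffun2; apply: eq_bigr => a _; apply: eq_bigr => b _.
by rewrite big_mkcond !big_ord_recl !big_ord0 /= !ffunE /=; ring.
Qed.

Lemma star_density2 : star_density 2 = wedge_density.
Proof.
rewrite /star_density sum_ffun3; apply: eq_bigr => a _; apply: eq_bigr => b _.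
apply: eq_bigr => c _.
by rewrite big_mkcond !big_ord_recl !big_ord0 /= !ffunE /=; ring.
Qed.

Lemma clique_density3 : clique_density 3 =
  \sum_(i < m) \sum_(j < m) \sum_(t < m) P i j * P i t * P j t * l i * l j * l t.
Proof.
rewrite /clique_density sum_ffun3; apply: eq_bigr => a _; apply: eq_bigr => b _.
apply: eq_bigr => c _; under eq_bigr do rewrite big_mkcond.
by rewrite !big_ord_recl !big_ord0 /= !ffunE /=; ring.
Qed.

Lemma subgraph_density_edge x y : x != y ->
  subgraph_density [set upair x y] = edge_density.
Proof.
by move=> xy; rewrite -imset_set1 subgraph_density_star ?cards1 ?star_density1 // inE.
Qed.

Lemma subgraph_density_wedge c a b : uniq [:: c; a; b] ->
  subgraph_density [set upair c a; upair c b] = wedge_density.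
Proof.
rewrite /= !inE !negb_or andbT => /andP[/andP[ca cb] ab].
rewrite -(imset_set2 (upair c)) subgraph_density_star ?cards2 ?ab ?star_density2 //.
by rewrite !inE !negb_or ca cb.
Qed.

Lemma subgraph_density_disjoint a b c d : uniq [:: a; b; c; d] ->
  subgraph_density [set upair a b; upair c d] = edge_density ^+ 2.
Proof.
move=> abcd; pose h (j : 'I_4) := nth a [:: a; b; c; d] j.
have h_inj : injective h by move=> i j /eqP; rewrite nth_uniq // => /eqP/val_inj.
pose psi (g : {ffun 'I_4 -> 'I_m}) := P (g ord0) (g (lift ord0 ord0)) *
  P (g (lift ord0 (lift ord0 ord0))) (g (lift ord0 (lift ord0 (lift ord0 ord0)))).
have ab_cd : upair a b \notin [set upair c d].
  rewrite inE; apply: contraL abcd => /eqP/upair_eq_mem.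
  by move=> /orP[]/eqP ->; rewrite /= !inE eqxx ?orbT /= ?andbF.
rewrite /subgraph_density (eq_bigr (fun f : {ffun 'I_n -> 'I_m} =>
    (\prod_u l (f u)) * psi [ffun j => f (h j)])) => [|f _]; last first.
  by rewrite big_setU1 //= big_set1 !P_upair /psi !ffunE.
rewrite sum_marginal_inj // sum_ffun4 expr2 mulr_suml; apply: eq_bigr => x _.
rewrite mulr_suml; apply: eq_bigr => y _; rewrite mulr_sumr; apply: eq_bigr => z _.
rewrite mulr_sumr; apply: eq_bigr => w _.
by rewrite /psi !big_ord_recl big_ord0 !ffunE /=; ring.
Qed.

Lemma sumr_const_notin (s : seq 'I_n) (Q : pred 'I_n) (x : R) :
  uniq s -> (forall w, Q w = (w \notin s)) -> \sum_(w | Q w) x = x *+ (n - size s).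
Proof.
move=> s_uniq Qs; rewrite sumr_const_cond.
have -> : [set w | Q w] = ~: [set:: s] by apply/setP => w; rewrite !inE Qs.
by rewrite cardsCs setCK card_ord cardsE (card_uniqP s_uniq).
Qed.

Lemma num_edges_upair (E : graph) :
  2 * (num_edges E)%:R = \sum_x \sum_(y | y != x) (upair x y \in E)%:R :> R.
Proof.
pose a (x y : 'I_n) : R := (((x, y) \in E) && (x < y)%N)%:R.
have edgesE : (num_edges E)%:R = \sum_x \sum_y a x y.
  rewrite /num_edges -sum1_card big_mkcond natr_sum pair_big /=.
  by apply: eq_bigr => -[x y] _; rewrite inE /a /upper_pair; case: (_ && _).
transitivity (\sum_x \sum_y (a x y + a y x)).
  under [RHS]eq_bigr do rewrite big_split.
  by rewrite big_split /= [X in _ + X]exchange_big -edgesE mulr_natl mulr2n.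
apply: eq_bigr => x _; rewrite [RHS]big_mkcond; apply: eq_bigr => y _.
rewrite /a /upair eq_sym; case: (ltngtP x y) => [xy|yx|/val_inj ->] /=.
- by rewrite neq_ltn xy andbT andbF addr0.
- by rewrite neq_ltn yx orbT andbT andbF add0r.
- by rewrite eqxx !andbF addr0.
Qed.

Definition pair_moment (x y z w : 'I_n) : R :=
  EE (fun E => ([set upair x y; upair z w] \subset E)%:R).

Lemma pair_momentE x y z w : x != y -> z != w ->
  pair_moment x y z w = subgraph_density [set upair x y; upair z w] ^+ k.
Proof.
move=> xy zw; apply: mfng_E_subset => q.
by rewrite !inE => /orP[] /eqP ->; apply: upper_upair.
Qed.

Lemma pair_momentCl x y z w : pair_moment x y z w = pair_moment y x z w.
Proof. by rewrite /pair_moment upairC. Qed.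

Lemma pair_momentCr x y z w : pair_moment x y z w = pair_moment x y w z.
Proof. by rewrite /pair_moment (upairC z). Qed.

Lemma mfng_E_edge x y : x != y ->
  EE (fun E => ([set upair x y] \subset E)%:R) = edge_density ^+ k.
Proof.
move=> xy; rewrite mfng_E_subset ?subgraph_density_edge // => q /set1P ->.
exact: upper_upair.
Qed.

Lemma pair_moment_edge x y : x != y -> pair_moment x y x y = edge_density ^+ k.
Proof. by move=> xy; rewrite /pair_moment setUid mfng_E_edge. Qed.

Lemma pair_moment_wedge c a b : c != a -> c != b -> a != b ->
  pair_moment c a c b = wedge_density ^+ k.
Proof.
move=> ca cb ab; rewrite pair_momentE ?subgraph_density_wedge //.
by rewrite /= !inE !negb_or ca cb ab.
Qed.

Lemma pair_moment_disjoint a b c d :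
  a != b -> a != c -> a != d -> b != c -> b != d -> c != d ->
  pair_moment a b c d = (edge_density ^+ 2) ^+ k.
Proof.
move=> ab ac ad bc bd cd; rewrite pair_momentE ?subgraph_density_disjoint //.
by rewrite /= !inE !negb_or ab ac ad bc bd cd.
Qed.

Lemma sum_pair_moment_shared x y : x != y ->
  \sum_(w | w != x) pair_moment x y x w = edge_density ^+ k + wedge_density ^+ k *+ (n - 2).
Proof.
move=> xy; have yx : y != x by rewrite eq_sym.
rewrite (bigD1 y) //= pair_moment_edge //; congr (_ + _).
rewrite (eq_bigr (fun _ => wedge_density ^+ k)) => [|w /andP[wx wy]].
  rewrite (sumr_const_notin (s := [:: x; y])) /= ?inE ?xy // => w.
  by rewrite !inE negb_or.
by rewrite pair_moment_wedge // eq_sym.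
Qed.

Lemma sum_pair_moment_apart x y z : z != x -> z != y -> x != y ->
  \sum_(w | w != z) pair_moment x y z w
  = wedge_density ^+ k *+ 2 + (edge_density ^+ 2) ^+ k *+ (n - 3).
Proof.
move=> zx zy xy; have [xz yz yx] : [/\ x != z, y != z & y != x] by split; rewrite eq_sym.
rewrite (bigD1 x) //= (bigD1 y) /= ?yz ?yx //.
rewrite pair_momentCr pair_moment_wedge // pair_momentCl pair_momentCr pair_moment_wedge //.
rewrite addrA -mulr2n; congr (_ + _).
rewrite (eq_bigr (fun _ => (edge_density ^+ 2) ^+ k)) => [|w /andP[/andP[wz wx] wy]].
  rewrite (sumr_const_notin (s := [:: z; x; y])) /= ?inE ?negb_or ?zx ?zy ?xy // => w.
  by rewrite !inE !negb_or andbA.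
by rewrite pair_moment_disjoint // eq_sym.
Qed.

(* the second edge equals, shares one node with, or is disjoint from the first *)
Definition pair_moment_sum : R :=
  (edge_density ^+ k + wedge_density ^+ k *+ (n - 2)) *+ 2
  + (wedge_density ^+ k *+ 2 + (edge_density ^+ 2) ^+ k *+ (n - 3)) *+ (n - 2).

Lemma sum_pair_moment x y : x != y ->
  \sum_z \sum_(w | w != z) pair_moment x y z w = pair_moment_sum.
Proof.
move=> xy; have yx : y != x by rewrite eq_sym.
rewrite (bigD1 x) //= [X in _ + X](bigD1 y) //= sum_pair_moment_shared //.
under eq_bigr do rewrite pair_momentCl.
rewrite sum_pair_moment_shared // addrA -mulr2n; congr (_ + _).
rewrite (eq_bigr (fun _ => wedge_density ^+ k *+ 2 + (edge_density ^+ 2) ^+ k *+ (n - 3))).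
  rewrite (sumr_const_notin (s := [:: x; y])) /= ?inE ?xy // => z.
  by rewrite !inE negb_or.
by move=> z /andP[zx zy]; rewrite sum_pair_moment_apart.
Qed.

Lemma mfng_E_num_edges_mul2 :
  2 * EE (fun E => (num_edges E)%:R) = edge_density ^+ k *+ (n - 1) *+ n.
Proof.
rewrite -mfng_E_scale (@mfng_E_wf _
  (fun E => \sum_x \sum_(y | y != x) ([set upair x y] \subset E)%:R)) => [|E _]; last first.
  by rewrite num_edges_upair; apply: eq_bigr => x _; apply: eq_bigr => y _; rewrite sub1set.
rewrite mfng_E_sum (eq_bigr (fun _ => edge_density ^+ k *+ (n - 1))).
  by rewrite sumr_const card_ord.
move=> x _; rewrite mfng_E_sum (eq_bigr (fun _ => edge_density ^+ k)) => [|y yx].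
  by rewrite (sumr_const_notin (s := [:: x])) // => y; rewrite inE.
by rewrite mfng_E_edge // eq_sym.
Qed.

Lemma mfng_E_num_edges_sqr_mul4 :
  4 * EE (fun E => (num_edges E)%:R ^+ 2) = pair_moment_sum *+ (n - 1) *+ n.
Proof.
rewrite -mfng_E_scale (@mfng_E_wf _ (fun E => \sum_x \sum_(y | y != x)
  \sum_z \sum_(w | w != z) ([set upair x y; upair z w] \subset E)%:R)) => [|E _]; last first.
  have -> : 4 * (num_edges E)%:R ^+ 2 = (2 * (num_edges E)%:R) ^+ 2 :> R by ring.
  rewrite num_edges_upair expr2 mulr_suml.
  apply: eq_bigr => x _; rewrite mulr_suml; apply: eq_bigr => y _.
  rewrite mulr_sumr; apply: eq_bigr => z _; rewrite mulr_sumr; apply: eq_bigr => w _.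
  by rewrite -natrM mulnb subUset !sub1set.
rewrite mfng_E_sum (eq_bigr (fun _ => pair_moment_sum *+ (n - 1))).
  by rewrite sumr_const card_ord.
move=> x _; rewrite mfng_E_sum (eq_bigr (fun _ => pair_moment_sum)) => [|y yx].
  by rewrite (sumr_const_notin (s := [:: x])) // => y; rewrite inE.
rewrite mfng_E_sum; under eq_bigr do rewrite mfng_E_sum.
by rewrite sum_pair_moment // eq_sym.
Qed.

Lemma mfng_E_num_edges :
  EE (fun E => (num_edges E)%:R) = 'C(n, 2)%:R * edge_density ^+ k.
Proof.
apply: (@mulfI _ 2); first by rewrite pnatr_eq0.
by rewrite mfng_E_num_edges_mul2 natr_bin2 subn1; field.
Qed.

Lemma mfng_Var_num_edges :
  @mfng_Var R n k m P l (fun E => (num_edges E)%:R) =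
  'C(n, 2)%:R * edge_density ^+ k * (1 - 'C(n, 2)%:R * edge_density ^+ k)
  + 2 * ((n * 'C(n.-1, 2))%:R * wedge_density ^+ k)
  + ('C(n, 2) * 'C(n - 2, 2))%:R * edge_density ^+ (2 * k).
Proof.
rewrite /mfng_Var mfng_E_num_edges; apply/eqP; rewrite subr_eq; apply/eqP.
apply: (@mulfI _ 4); first by rewrite pnatr_eq0.
rewrite mfng_E_num_edges_sqr_mul4 /pair_moment_sum !natrM !natr_bin2 exprM.
by rewrite -subnS -subn2 -subn1; field.
Qed.

End Model.

Theorem corollary2 (R : realFieldType) (m k n : nat)
    (l : 'I_m -> R) (P : 'M[R]_m) :
  (1 <= m)%N -> (1 <= k)%N -> (2 <= n)%N ->
  (forall i, 0 <= l i) -> \sum_(i < m) l i = 1 ->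
  P^T = P -> (forall i j, 0 <= P i j <= 1) ->
  let EX := @mfng_E R n k m P l in
  let s := \sum_(i < m) \sum_(j < m) P i j * l i * l j in
  (* (i) *)
  (forall d : nat, (1 <= d <= n.-1)%N ->
     EX (fun E => (num_stars d E)%:R) =
     (n * 'C(n.-1, d))%:R *
     (\sum_(i : {ffun 'I_d.+1 -> 'I_m})
        (\prod_(j : 'I_d.+1 | (0 < j)%N) P (i ord0) (i j)) *
        \prod_(j : 'I_d.+1) l (i j)) ^+ k) /\
  EX (fun E => (num_stars 2 E)%:R) =
    (n * 'C(n.-1, 2))%:R *
    (\sum_(i1 < m) \sum_(i2 < m) \sum_(i3 < m)
       P i1 i2 * P i1 i3 * l i1 * l i2 * l i3) ^+ k /\
  (* (ii) *)
  @mfng_Var R n k m P l (fun E => (num_edges E)%:R) =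
    'C(n, 2)%:R * s ^+ k * (1 - 'C(n, 2)%:R * s ^+ k)
    + 2 * EX (fun E => (num_stars 2 E)%:R)
    + ('C(n, 2) * 'C(n - 2, 2))%:R * s ^+ (2 * k) /\
  (* (iii) *)
  (forall t : nat, (2 <= t <= n)%N ->
     EX (fun E => (num_cliques t E)%:R) =
     'C(n, t)%:R *
     (\sum_(i : {ffun 'I_t -> 'I_m})
        (\prod_(j : 'I_t) \prod_(q : 'I_t | (j < q)%N) P (i j) (i q)) *
        \prod_(j : 'I_t) l (i j)) ^+ k) /\
  EX (fun E => (num_cliques 3 E)%:R) =
    'C(n, 3)%:R *
    (\sum_(i < m) \sum_(j < m) \sum_(t < m)
       P i j * P i t * P j t * l i * l j * l t) ^+ k /\
  (* (iv) *)
  EX (fun E => (num_deg n.-1 E)%:R) = EX (fun E => (num_stars n.-1 E)%:R) /\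
  (forall d : nat, (1 <= d <= n - 2)%N ->
     EX (fun E => (num_deg d E)%:R) =
     EX (fun E => (num_stars d E)%:R) -
     \sum_(d.+1 <= i < n) 'C(i, d)%:R * EX (fun E => (num_deg i E)%:R)).
Proof.
move=> _ _ n_ge2 _ l_sum1 PT _ EX s.
have P_sym i j : P i j = P j i by rewrite -[in LHS]PT mxE.
have ES2 := mfng_E_num_stars n k P_sym l_sum1 2.
rewrite /EX /s.
split; first by move=> d _; exact: mfng_E_num_stars.
split; first by rewrite ES2 star_density2.
split; first by rewrite mfng_Var_num_edges // ES2 star_density2.
split; first by move=> t _; exact: mfng_E_num_cliques.
split; first by rewrite mfng_E_num_cliques // clique_density3.
have n_gt0 : (0 < n)%N by apply: ltnW.
split.
  by rewrite mfng_E_num_stars_deg big_ltn ?ltn_predL // prednK // big_geq // binn mul1r addr0.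
move=> d /andP[_ d_le]; rewrite mfng_E_num_stars_deg big_ltn ?binn ?mul1r ?addrK //.
lia.
Qed.
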